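(* Let $n\ge 0$ be an even integer and $p\in\Gamma_n$. Then $\mathrm{Sub}(p)=\{\sigma_{n-1}(p),\pi_{n-1}(p)\}$; that is, the only occurrences of $(n-1)$-ambiguities in $p$ are the suffix $\sigma_{n-1}(p)$ and the prefix $\pi_{n-1}(p)$ (and these two are distinct).
   Context: Let $\Bbbk$ be a field, $Q=(Q_0,Q_1,s,t)$ a finite quiver, and $A=\Bbbk Q/I$ a finite-dimensional monomial algebra, i.e. $I$ is an ideal generated by paths of length at least $2$. Paths are written from right to left: a path is $p=\alpha_n\cdots\alpha_1$ with arrows $\alpha_i$ and $t(\alpha_i)=s(\alpha_{i+1})$; vertices are the paths of length $0$ (trivial paths, also denoted $1$); $qp$ denotes concatenation when $t(p)=s(q)$. Let $\mathcal B$ be the set of paths not lying in $I$. If $p=bqa$ for paths $a,b,q$, then $q$ is a divisor of $p$; we write $q\le p$ to mean that $q$ is a divisor of $p$ at a fixed position (an occurrence), and then $\mathrm{pre}_p(q):=a$, $\mathrm{suf}_p(q):=b$. If $b$ is trivial, $q$ is a suffix; if $a$ is trivial, $q$ is a prefix; proper means $q\neq p$, written $q\lneq p$. For $n\ge -1$, a left $n$-ambiguity is a path $p$ with a decomposition $p=u_{-1}u_0u_1\cdots u_n$ such that $u_{-1}\in Q_0$, $u_0\in Q_1$, $u_i\in\mathcal B$ for all $i$, and for every $0\le i\le n-1$, $u_iu_{i+1}\in I$ while no proper suffix of $u_iu_{i+1}$ lies in $I$ (one writes $p=u_0\cdots u_n$). A right $n$-ambiguity is a path with a decomposition $p=v_n\cdots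 v_0v_{-1}$ with $v_{-1}\in Q_0$, $v_0\in Q_1$, $v_i\in\mathcal B$, and for $0\le i\le n-1$, $v_{i+1}v_i\in I$ while no proper prefix of $v_{i+1}v_i$ lies in $I$. A path is a left $n$-ambiguity iff it is a right $n$-ambiguity; such paths are called $n$-ambiguities, and $\Gamma_n$ denotes their set. Both decompositions of an $n$-ambiguity are unique. For $p\in\Gamma_n$ with left decomposition $u_0\cdots u_n$ and right decomposition $v_n\cdots v_0$, and $-1\le m\le n$, set $\sigma_m(p):=u_0\cdots u_m$ (a suffix of $p$ which is an $m$-ambiguity) and $\pi_m(p):=v_m\cdots v_0$ (a prefix of $p$ which is an $m$-ambiguity). For $p\in\Gamma_n$, $\mathrm{Sub}(p):=\{q\in\Gamma_{n-1}: q\le p\}$ is the set of occurrences of $(n-1)$-ambiguities in $p$. *)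

From HB Require Import structures.
From mathcomp Require Import all_boot all_order all_algebra.
From Stdlib Require Import ClassicalEpsilon.

Set Implicit Arguments.
Unset Strict Implicit.
Unset Printing Implicit Defensive.

Import GRing.Theory Num.Theory.

(* Conventions:
   - A path of the quiver (V, E, s, t) is a pair (v, w) : V * seq E, where v is
     its source vertex and w is the list of its arrows IN TRAVERSAL ORDER
     (i.e. the path alpha_n ... alpha_1 of the paper is (s alpha_1, [alpha_1; ...; alpha_n])).
     Trivial paths are (v, [::]).
   - The concatenation qp of the paper (first p, then q) is [pcat p q].
   - A "suffix" in the paper (left factor, traversed last) is the END of the
     arrow list; a "prefix" is its BEGINNING.
   - The monomial ideal I is given by a list [rels] of generating paths
     (arrow lists); a path lies in I iff some generator is a contiguous
     subpath of it.
   - Occurrences q <= p are encoded by positions (i, l) : nat * nat with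
     i + l <= length p: the subpath starting after the first i arrows of p and
     consisting of the next l arrows (l = 0 gives vertex occurrences).
   - Ambiguity degrees n >= -1 are integers. *)

Section Quiver.
Variables (V E : finType) (s t : E -> V).

Definition qpath := (V * seq E)%type.
Definition src (p : qpath) : V := p.1.
Definition arrs (p : qpath) : seq E := p.2.
Definition plen (p : qpath) : nat := size p.2.
Definition tgt (p : qpath) : V := last p.1 (map t p.2).

Definition validw (w : seq E) : bool := sorted (fun a b => t a == s b) w.
Definition valid (p : qpath) : bool :=
  validw (arrs p) && (if arrs p is a :: _ then s a == src p else true).

(* the path "q p" of the paper: first p, then q *)
Definition pcat (p q : qpath) : qpath := (src p, arrs p ++ arrs q).
Definition composable (p q : qpath) : bool := tgt p == src q.

Definition vtx_at (p : qpath) (i : nat) : V := last (src p) (map t (take i (arrs p))).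
Definition subp (p : qpath) (i l : nat) : qpath := (vtx_at p i, take l (drop i (arrs p))).

Variable rels : seq (seq E).

Definition inI (p : qpath) : bool := has (fun r => infix r (arrs p)) rels.
Definition inB (p : qpath) : bool := valid p && ~~ inI p.

Definition no_proper_suffix_in_I (p : qpath) : Prop :=
  forall j, 0 < j <= plen p -> ~~ inI (subp p j (plen p - j)).
Definition no_proper_prefix_in_I (p : qpath) : Prop :=
  forall l, l < plen p -> ~~ inI (subp p 0 l).

(* left decomposition p = u_{-1} u_0 u_1 ... u_n, us = [:: u_0; ...; u_n];
   u_{-1} is the (trivial) target vertex, implicit. *)
Definition left_decomp (n : int) (p : qpath) (us : seq qpath) : Prop :=
  Posz (size us) = (n + 1)%R /\ valid p /\
  match us with
  | [::] => arrs p = [::]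
  | u0 :: _ =>
      plen u0 = 1%N /\ (forall u, u \in us -> inB u) /\
      (forall i, i.+1 < size us ->
         composable (nth p us i.+1) (nth p us i) /\
         inI (pcat (nth p us i.+1) (nth p us i)) /\
         no_proper_suffix_in_I (pcat (nth p us i.+1) (nth p us i))) /\
      p = (src (last u0 us), flatten (rev (map arrs us)))
  end.

(* right decomposition p = v_n ... v_1 v_0 v_{-1}, vs = [:: v_0; ...; v_n];
   v_{-1} is the (trivial) source vertex, implicit. *)
Definition right_decomp (n : int) (p : qpath) (vs : seq qpath) : Prop :=
  Posz (size vs) = (n + 1)%R /\ valid p /\
  match vs with
  | [::] => arrs p = [::]
  | v0 :: _ =>
      plen v0 = 1%N /\ (forall v, v \in vs -> inB v) /\
      (forall i, i.+1 < size vs ->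
         composable (nth p vs i) (nth p vs i.+1) /\
         inI (pcat (nth p vs i) (nth p vs i.+1)) /\
         no_proper_prefix_in_I (pcat (nth p vs i) (nth p vs i.+1))) /\
      p = (src v0, flatten (map arrs vs))
  end.

(* Gamma_n : the n-ambiguities (left n-ambiguities; equivalently right ones) *)
Definition Gamma (n : int) (p : qpath) : Prop := exists us, left_decomp n p us.

Definition left_dec (n : int) (p : qpath) : seq qpath :=
  epsilon (inhabits [::]) (left_decomp n p).
Definition right_dec (n : int) (p : qpath) : seq qpath :=
  epsilon (inhabits [::]) (right_decomp n p).

(* sigma_m(p) = u_0 ... u_m : suffix of p; its occurrence (position, length) *)
Definition sigma_occ (m n : int) (p : qpath) : nat * nat :=
  let L := sumn (map plen (take `|(m + 1)%R|%N (left_dec n p))) in (plen p - L, L).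
(* pi_m(p) = v_m ... v_0 : prefix of p; its occurrence (position, length) *)
Definition pi_occ (m n : int) (p : qpath) : nat * nat :=
  (0, sumn (map plen (take `|(m + 1)%R|%N (right_dec n p)))).

Definition Sub_occ (n : int) (p : qpath) (o : nat * nat) : Prop :=
  o.1 + o.2 <= plen p /\ Gamma (n - 1)%R (subp p o.1 o.2).

End Quiver.

(* Record a decomposition of a path by its cut points, in traversal order, and
   write [J x y] when the arrows between positions [x] and [y] form a path in I;
   [J] is upward closed, so the conditions on proper suffixes (prefixes) only
   need to be checked for the window one arrow shorter.  A left decomposition
   becomes a "left chain" of cuts, a right decomposition a "right chain".
   A left chain turns into a right chain on the same interval greedily, and a
   right chain into a left chain by mirroring.  Left chains with a common end
   agree counted from the end; right chains with a common start agree counted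
   from the start.
   Let q be an (n-1)-ambiguity occurring in p in Gamma_n.  If q ends where p
   ends, its n blocks are the last n blocks of p and q = sigma_(n-1)(p).
   Otherwise q ends at or before the last cut of p, and then every second cut
   of q lags behind the corresponding cut of p; n being even, this forces q to
   start where p starts, and comparing right chains gives q = pi_(n-1)(p). *)

From HB Require Import structures.
From mathcomp Require Import all_boot all_order all_algebra.
From mathcomp Require Import zify.
From Stdlib Require Import ClassicalEpsilon.
Import GRing.Theory Num.Theory.

Set Implicit Arguments.
Unset Strict Implicit.
Unset Printing Implicit Defensive.

Lemma increasing_on_le N (D : nat -> nat) :
  (forall k, k < N -> D k < D k.+1) -> forall i j, i <= j -> j <= N -> D i <= D j.
Proof.
move=> D_lt; have D_le : {in [pred k | k <= N] &, {homo D : i j / i <= j}}.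
  apply: homo_leq_in => [//|y x z|i j _ jN k /andP[_ kj]|i _ iN]; rewrite ?inE.
  - exact: leq_trans.
  - exact: leq_trans (ltnW kj) jN.
  - exact/ltnW/D_lt.
by move=> i j ij jN; apply: D_le; rewrite ?inE // (leq_trans ij).
Qed.

Definition upward_closed (J : rel nat) : Prop :=
  forall x y x' y', x <= x' -> y' <= y -> J x' y' -> J x y.

Definition mirror (c : nat) (J : rel nat) : rel nat := fun x y => J (c - y) (c - x).

Section Chains.
Variable J : rel nat.

(* For a left decomposition u_0 ... u_n of the paper
   block k is u_(n-k), so the one-arrow block u_0 comes last; for a right
   decomposition v_n ... v_0 block k is v_k. *)
Record left_chain (a e N : nat) (D : nat -> nat) : Prop := LeftChain {
  lchain0 : D 0 = a;
  lchainN : D N = e;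
  lchain_lt : forall k, k < N -> D k < D k.+1;
  lchain_last : 0 < N -> (D N.-1).+1 = e;
  lchain_block : forall k, k < N -> ~~ J (D k) (D k.+1);
  lchain_pair : forall k, k.+2 <= N -> J (D k) (D k.+2);
  lchain_min : forall k, k.+2 <= N -> ~~ J (D k).+1 (D k.+2) }.

Record right_chain (a e N : nat) (D : nat -> nat) : Prop := RightChain {
  rchain0 : D 0 = a;
  rchainN : D N = e;
  rchain_lt : forall k, k < N -> D k < D k.+1;
  rchain_first : 0 < N -> D 1 = a.+1;
  rchain_block : forall k, k < N -> ~~ J (D k) (D k.+1);
  rchain_pair : forall k, k.+2 <= N -> J (D k) (D k.+2);
  rchain_min : forall k, k.+2 <= N -> ~~ J (D k) (D k.+2).-1 }.

Lemma left_chain_bounds a e N D : left_chain a e N D -> forall k, k <= N -> a <= D k <= e.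
Proof. by case=> D0 DN D_lt *; rewrite -D0 -DN !(increasing_on_le D_lt). Qed.

Lemma right_chain_bounds a e N D : right_chain a e N D -> forall k, k <= N -> a <= D k <= e.
Proof. by case=> D0 DN D_lt *; rewrite -D0 -DN !(increasing_on_le D_lt). Qed.

Hypothesis J_up : upward_closed J.

Section Greedy.
Variable e : nat.

(* The least [x <= e] with [J y x], and [e.+1] if there is none. *)
Definition jmin (y : nat) : nat := find (J y) (iota 0 e.+1).

Lemma jmin_le y x : J y x -> x <= e -> jmin y <= x.
Proof.
move=> Jyx xe; rewrite leqNgt; apply/negP=> /(before_find 0).
by rewrite nth_iota ?add0n ?Jyx.
Qed.

Lemma J_jmin y x : J y x -> x <= e -> J y (jmin y).
Proof.
move=> Jyx xe; have has_J : has (J y) (iota 0 e.+1) by apply/hasP; exists x; rewrite ?mem_iota.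
have := nth_find 0 has_J; rewrite nth_iota ?add0n //.
by move: has_J; rewrite has_find size_iota.
Qed.

Lemma jmin_min y z : z < jmin y -> ~~ J y z.
Proof.
move=> zy; have := before_find 0 zy; rewrite nth_iota ?add0n // => [->//|].
by apply: leq_trans zy _; rewrite -(size_iota 0 e.+1) find_size.
Qed.

Lemma jmin_gt y x z : J y z -> z <= e -> ~~ J y x -> x < jmin y.
Proof. by move=> Jyz ze; apply: contraNltn => le_jx; apply: J_up le_jx (J_jmin Jyz ze). Qed.

Fixpoint greedy_cuts (a k : nat) : nat :=
  if k is k'.+2 then jmin (greedy_cuts a k') else if k is 1 then a.+1 else a.

Variables (a N : nat) (D : nat -> nat).
Hypothesis D_chain : left_chain a e N D.
Let G := greedy_cuts a.

Lemma greedy_cuts_interleave j : j <= N ->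
  [/\ G j <= D j, (j < N -> D j < G j.+1) & (0 < j -> ~~ J (G j.-1) (D j))].
Proof.
have [D0 _ D_lt _ D_block D_pair D_min] := D_chain.
have De k : k <= N -> D k <= e by move=> kN; case/andP: (left_chain_bounds D_chain kN).
elim/ltn_ind: j => -[_ _|[_ N1|j IH j2N]] /=.
- by split; rewrite ?D0.
- have lt1 := D_lt 0 N1; rewrite D0 in lt1.
  split=> // [N2|_]; last by rewrite /G /= -D0 D_block.
  by apply: jmin_gt _ (De 2 N2) _; rewrite -D0 ?D_pair ?D_block.
have [Gj Dj _] := IH j (ltnW (ltnSn _)) (ltnW (ltnW j2N)).
have [Gj1 _ _] := IH j.+1 (ltnSn _) (ltnW j2N).
have nJ : ~~ J (G j.+1) (D j.+2).
  by apply: contra (D_min j j2N); apply: J_up (Dj (ltnW j2N)) (leqnn _).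
split=> // [|j3N].
- by apply: jmin_le (De _ j2N); apply: J_up Gj (leqnn _) (D_pair j j2N).
- by apply: jmin_gt (De _ j3N) nJ; apply: J_up Gj1 (leqnn _) (D_pair j.+1 j3N).
Qed.

Lemma greedy_cutsN : G N = e.
Proof.
have [D0 DN _ D_last _ _ _] := D_chain.
have [N0|N_gt0] := posnP N; first by rewrite /G /= -D0 -DN N0.
have [GN _ _] := greedy_cuts_interleave (leqnn N).
have [_ DN1 _] := greedy_cuts_interleave (leq_pred N).
move: DN1; rewrite prednK // => /(_ (leqnn N)); rewrite (D_last N_gt0) => eGN.
by apply/eqP; rewrite eqn_leq -{1}DN GN.
Qed.

Lemma left_to_right_chain : right_chain a e N G.
Proof.
have GD k (kN : k <= N) := greedy_cuts_interleave kN.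
split=> // [|k kN|k kN|k k2N|k k2N].
- exact: greedy_cutsN.
- by have [Gk Dk _] := GD k (ltnW kN); apply: leq_ltn_trans Gk (Dk kN).
- have [k1N|] := ltnP k.+1 N.
    by have [Gk1 Dk1 _] := GD k.+1 (ltnW k1N); apply/jmin_min/(leq_ltn_trans Gk1 (Dk1 k1N)).
  move=> Nk1; have k1N : k.+1 = N by apply/eqP; rewrite eqn_leq kN.
  have [_ _ nJ] := GD N (leqnn N); rewrite -k1N /= in nJ.
  by rewrite k1N greedy_cutsN -(lchainN D_chain) -k1N nJ.
- have [Gk _ _] := GD k (ltnW (ltnW k2N)).
  apply: J_jmin (J_up Gk (leqnn _) (lchain_pair D_chain k2N)) _.
  by case/andP: (left_chain_bounds D_chain k2N).
- apply: jmin_min; rewrite ltn_predL.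
  by have [_ Dk1 _] := GD k.+1 (ltnW k2N); apply: leq_ltn_trans (Dk1 k2N).
Qed.

End Greedy.

Lemma left_end_uniq x x' y :
  J x y -> ~~ J x.+1 y -> J x' y -> ~~ J x'.+1 y -> x = x'.
Proof.
move=> Jxy nJxy Jx'y nJx'y; case: (ltngtP x x') => // [lt_xx'|lt_x'x].
- by rewrite (J_up lt_xx' (leqnn y) Jx'y) in nJxy.
- by rewrite (J_up lt_x'x (leqnn y) Jxy) in nJx'y.
Qed.

Lemma left_chain_top_uniq a a' e N N' A A' :
  left_chain a e N A -> left_chain a' e N' A' ->
  forall i, i <= N -> i <= N' -> A (N - i) = A' (N' - i).
Proof.
move=> A_chain A'_chain; elim/ltn_ind=> -[_ _ _|[_ N_gt0 N'_gt0|i IH iN iN']].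
- by rewrite !subn0 (lchainN A_chain) (lchainN A'_chain).
- apply/eqP; rewrite -eqSS !subn1.
  by rewrite (lchain_last A_chain) ?(lchain_last A'_chain).
have top_eq : A (N - i.+2).+2 = A' (N' - i.+2).+2.
  have -> : (N - i.+2).+2 = N - i by lia.
  have -> : (N' - i.+2).+2 = N' - i by lia.
  by apply: IH => //; lia.
apply: (left_end_uniq (y := A (N - i.+2).+2)).
- by apply: (lchain_pair A_chain); lia.
- by apply: (lchain_min A_chain); lia.
- by rewrite top_eq; apply: (lchain_pair A'_chain); lia.
- by rewrite top_eq; apply: (lchain_min A'_chain); lia.
Qed.

(* If [A' (N' - 2k - 2)] overtook [A (N - 3 - 2k)], the pair of blocks of [A']
   ending at [A' (N' - 2k) <= A (N - 1 - 2k)] would put a proper suffix of a pair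
   of blocks of [A] into [J]. *)
Lemma left_chain_lag a e N A a' e' N' A' :
  left_chain a e N A -> left_chain a' e' N' A' -> e' <= A N.-1 ->
  forall k, k.*2 <= N' -> k.*2 < N -> A' (N' - k.*2) <= A (N.-1 - k.*2).
Proof.
move=> A_chain A'_chain e'_le; elim=> [|k IH]; first by rewrite !subn0 (lchainN A'_chain).
rewrite doubleS => k2N' k2N.
have le_top : A' (N' - k.*2.+2).+2 <= A (N.-1 - k.*2.+2).+2.
  have -> : (N' - k.*2.+2).+2 = N' - k.*2 by lia.
  have -> : (N.-1 - k.*2.+2).+2 = N.-1 - k.*2 by lia.
  by apply: IH; lia.
rewrite leqNgt; apply/negP=> lt_bot.
have min_pair : (N.-1 - k.*2.+2).+2 <= N by lia.
move/negP: (lchain_min A_chain min_pair); apply.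
by apply: J_up lt_bot le_top _; apply: (lchain_pair A'_chain); lia.
Qed.

Lemma left_chain_behead a e N A : left_chain a e N.+1 A -> left_chain (A 1) e N (A \o succn).
Proof.
case=> _ AN A_lt A_last A_block A_pair A_min; split=> // [k kN|N_gt0|k kN|k kN|k kN] /=.
- exact: A_lt.
- by rewrite prednK // A_last.
- exact: A_block.
- exact: A_pair.
- exact: A_min.
Qed.

Lemma right_chain_take a e N E M : right_chain a e N E -> M <= N -> right_chain a (E M) M E.
Proof.
case=> E0 _ E_lt E_first E_block E_pair E_min MN; split=> // [k kM|M_gt0|k kM|k kM|k kM].
- by apply: E_lt; lia.
- by apply: E_first; lia.
- by apply: E_block; lia.
- by apply: E_pair; lia.
- by apply: E_min; lia.
Qed.

End Chains.

Lemma upward_closed_mirror c J : upward_closed J -> upward_closed (mirror c J).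
Proof.
by move=> J_up x y x' y' xx' y'y; apply: J_up; apply: leq_sub2l.
Qed.

Lemma right_chain_mirror (J : rel nat) a e N E c : right_chain J a e N E -> e <= c ->
  left_chain (mirror c J) (c - e) (c - a) N (fun k => c - E (N - k)).
Proof.
move=> E_chain ec; have E_le k : k <= N -> E k <= c.
  by move=> kN; case/andP: (right_chain_bounds E_chain kN) => _ /leq_trans; apply.
have cK k : k <= N -> c - (c - E k) = E k by move=> /E_le/subKn.
case: E_chain => E0 EN E_lt E_first E_block E_pair E_min.
split=> [|| k kN | N_gt0 | k kN | k k2N | k k2N]; rewrite /mirror /= ?subn0 ?subnn.
- by rewrite EN.
- by rewrite E0.
- have -> : N - k = (N - k.+1).+1 by lia.
  by have := E_lt (N - k.+1) _; have := E_le (N - k.+1).+1 _; lia.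
- by rewrite (_ : N - N.-1 = 1) ?E_first //; have := E_le 1 N_gt0; lia.
- have mN : N - k.+1 < N by lia.
  have -> : N - k = (N - k.+1).+1 by lia.
  by rewrite !cK ?E_block //; apply: ltnW.
- have m2N : (N - k.+2).+2 <= N by lia.
  have -> : N - k = (N - k.+2).+2 by lia.
  by rewrite !cK ?E_pair //; lia.
- have m2N : (N - k.+2).+2 <= N by lia.
  have -> : N - k = (N - k.+2).+2 by lia.
  have E_gt0 : 0 < E (N - k.+2).+2 by have := E_lt (N - k.+2).+1 m2N; lia.
  have E_lec := E_le _ m2N; rewrite cK; last by lia.
  have -> : c - (c - E (N - k.+2).+2).+1 = (E (N - k.+2).+2).-1 by lia.
  exact: E_min.
Qed.

Lemma left_chain_shift (J J' : rel nat) c a e N D :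
  (forall x y, x <= y <= e -> J x y = J' (c + x) (c + y)) ->
  left_chain J a e N D -> left_chain J' (c + a) (c + e) N (fun k => c + D k).
Proof.
move=> JJ' D_chain; have D_le := increasing_on_le (lchain_lt D_chain).
have J'D x l : x <= D l -> l <= N -> J' (c + x) (c + D l) = J x (D l).
  by move=> xl lN; rewrite JJ' // xl; case/andP: (left_chain_bounds D_chain lN).
case: D_chain => D0 DN D_lt D_last D_block D_pair D_min.
split=> [|| k kN | N_gt0 | k kN | k k2N | k k2N] /=.
- by rewrite D0.
- by rewrite DN.
- by rewrite ltn_add2l D_lt.
- by rewrite -addnS D_last.
- by rewrite J'D ?D_block //; apply/ltnW/D_lt.
- by rewrite J'D ?D_pair // D_le // ltnW.
- by rewrite -addnS J'D ?D_min //; apply: leq_trans (D_lt k _) (D_le _ _ _ _); lia.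
Qed.

(* Mirror, run the greedy construction, and mirror back. *)
Lemma right_to_left_chain (J : rel nat) a e N E :
  upward_closed J -> right_chain J a e N E -> exists D, left_chain J a e N D.
Proof.
move=> J_up E_chain; have /andP[_] := right_chain_bounds E_chain (leq0n N).
rewrite (rchain0 E_chain) => ae.
have := right_chain_mirror E_chain (leqnn e); rewrite subnn => mirror_chain.
have := left_to_right_chain (@upward_closed_mirror e J J_up) mirror_chain.
move=> /right_chain_mirror /(_ (leq_subr a e)); rewrite subKn // subn0.
move=> /(left_chain_shift (J' := J) (c := 0)) D_chain; eexists; apply: D_chain.
by move=> x y /andP[xy ye]; rewrite /mirror !subKn // (leq_trans xy).
Qed.

(* Mirrored at a common bound, both become left chains with a common end. *)
Lemma right_chain_bot_uniq (J : rel nat) a e e' N N' E E' :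
  upward_closed J -> right_chain J a e N E -> right_chain J a e' N' E' ->
  forall k, k <= N -> k <= N' -> E k = E' k.
Proof.
move=> J_up E_chain E'_chain k kN kN'.
have := left_chain_top_uniq (@upward_closed_mirror (e + e') J J_up)
  (right_chain_mirror E_chain (leq_addr e' e)) (right_chain_mirror E'_chain (leq_addl e e')) kN kN'.
rewrite !subKn //.
case/andP: (right_chain_bounds E_chain kN) => _; case/andP: (right_chain_bounds E'_chain kN') => _.
lia.
Qed.

Section Words.
Variables (E : eqType) (rels : seq (seq E)).

Definition window (w : seq E) (x y : nat) : seq E := take (y - x) (drop x w).
Definition window_in_ideal (w : seq E) : rel nat :=
  fun x y => has (fun r => infix r (window w x y)) rels.

Lemma window_cat w x y z : x <= y -> y <= z -> window w x y ++ window w y z = window w x z.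
Proof.
move=> xy yz; rewrite /window (_ : z - x = (y - x) + (z - y)); last by lia.
by rewrite takeD drop_drop subnK.
Qed.

Lemma drop_window w x y j : drop j (window w x y) = window w (x + j) y.
Proof.
rewrite /window; case: (leqP y (x + j)) => xjy.
  rewrite (_ : y - (x + j) = 0) ?take0; last by lia.
  by apply/eqP; rewrite -size_eq0 size_drop size_take_min; lia.
by rewrite (_ : y - x = (y - (x + j)) + j) -?take_drop ?drop_drop 1?addnC //; lia.
Qed.

Lemma take_window w x y l : l <= y - x -> take l (window w x y) = window w x (x + l).
Proof. by move=> ly; rewrite /window take_takel // addKn. Qed.

Lemma window_infix w x y x' y' : x <= x' -> y' <= y -> infix (window w x' y') (window w x y).
Proof.
move=> xx' y'y; case: (leqP y' x') => x'y'.
  by rewrite /window (_ : y' - x' = 0) ?take0 ?infix0s //; lia.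
rewrite -(window_cat w xx' (_ : x' <= y)); last by lia.
rewrite -(window_cat w (_ : x' <= y') y'y); last by lia.
by apply/infixP; exists (window w x x'), (window w y' y).
Qed.

Lemma size_window w x y : y <= size w -> size (window w x y) = y - x.
Proof. by move=> yw; rewrite /window size_takel // size_drop leq_sub2r. Qed.

Lemma window_in_ideal_up w : upward_closed (window_in_ideal w).
Proof.
move=> x y x' y' xx' y'y /hasP[r r_rel r_inf]; apply/hasP; exists r => //.
exact: infix_trans r_inf (window_infix w xx' y'y).
Qed.

Lemma window_take_drop w a l x y :
  y <= l -> window (take l (drop a w)) x y = window w (a + x) (a + y).
Proof.
move=> yl; rewrite /window subnDl.
case: (leqP x y) => xy; last by rewrite (_ : y - x = 0) ?take0 //; lia.
have -> : drop x (take l (drop a w)) = take (l - x) (drop x (drop a w)).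
  by rewrite [RHS]take_drop subnK //; lia.
by rewrite take_takel ?drop_drop ?(addnC x) //; lia.
Qed.

End Words.

Section Cuts.
Variables V E : finType.

Definition cuts (xs : seq (qpath V E)) (k : nat) : nat := sumn (map (@plen V E) (take k xs)).

Lemma cuts_le xs i j : i <= j -> cuts xs i <= cuts xs j.
Proof. by move=> ij; rewrite /cuts -(subnKC ij) takeD map_cat sumn_cat leq_addr. Qed.

Lemma cutsS xs k d : k < size xs -> cuts xs k.+1 = cuts xs k + plen (nth d xs k).
Proof. by move=> k_lt; rewrite /cuts (take_nth d k_lt) -cats1 map_cat sumn_cat /= addn0. Qed.

Lemma size_flatten_arrs xs : size (flatten (map (@arrs V E) xs)) = sumn (map (@plen V E) xs).
Proof. by rewrite size_flatten /shape -map_comp. Qed.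

Lemma cuts_size xs : cuts xs (size xs) = size (flatten (map (@arrs V E) xs)).
Proof. by rewrite /cuts take_size size_flatten_arrs. Qed.

Lemma window_cuts w xs k d : w = flatten (map (@arrs V E) xs) -> k < size xs ->
  window w (cuts xs k) (cuts xs k.+1) = arrs (nth d xs k).
Proof.
move=> -> k_lt; have -> : flatten (map (@arrs V E) xs) = flatten (map (@arrs V E) (take k xs)) ++
    (arrs (nth d xs k) ++ flatten (map (@arrs V E) (drop k.+1 xs))).
  by rewrite -{1}(cat_take_drop k xs) (drop_nth d k_lt) map_cat flatten_cat.
rewrite (cutsS d k_lt) /window addKn drop_size_cat ?take_size_cat //.
by rewrite size_flatten_arrs.
Qed.

Lemma window_cuts2 w xs k d : w = flatten (map (@arrs V E) xs) -> k.+1 < size xs ->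
  window w (cuts xs k) (cuts xs k.+2) = arrs (pcat (nth d xs k) (nth d xs k.+1)).
Proof.
move=> w_def k_lt; rewrite -(window_cat _ (cuts_le xs (leqnSn k)) (cuts_le xs (leqnSn k.+1))).
by rewrite !(window_cuts d w_def) // ltnW.
Qed.

End Cuts.

Section Subpaths.
Variables (V E : finType) (s t : E -> V).

Lemma src_nth_validw (v : V) (w : seq E) a0 : validw s t w ->
  (if w is a :: _ then s a == v else true) ->
  forall i, i < size w -> s (nth a0 w i) = last v (map t (take i w)).
Proof.
elim: w v => [|a w IH] v //= w_valid a_src [|i] i_lt /=; first exact/eqP.
apply: IH i_lt; first exact: path_sorted w_valid.
by move: w_valid; case: (w) => //= b w' /andP[]; rewrite eq_sym.
Qed.

Lemma valid_subp p i l : valid s t p -> valid s t (subp t p i l).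
Proof.
rewrite /valid /subp /arrs /src /vtx_at /= => /andP[w_valid p_src]; apply/andP; split.
  exact: take_sorted (drop_sorted _ w_valid).
case w_def: (take l (drop i p.2)) => [|a r] //=.
have i_lt : i < size p.2 by rewrite ltnNge; apply/negP=> /drop_oversize w_nil; rewrite w_nil in w_def.
have l_gt0 : 0 < l by case: (l) w_def => //; rewrite take0.
have -> : a = nth a p.2 i by rewrite -[i]addn0 -nth_drop -(nth_take a l_gt0) w_def.
by apply/eqP; apply: src_nth_validw.
Qed.

Lemma tgt_subp p i l : tgt t (subp t p i l) = vtx_at t p (i + l).
Proof. by rewrite /tgt /subp /vtx_at /= takeD map_cat last_cat. Qed.

Lemma composable_subp p x y l : x <= y -> composable t (subp t p x (y - x)) (subp t p y l).
Proof. by move=> xy; rewrite /composable tgt_subp subnKC. Qed.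

Lemma arrs_pcat_subp p x y z : x <= y -> y <= z ->
  arrs (pcat (subp t p x (y - x)) (subp t p y (z - y))) = window (arrs p) x z.
Proof. by move=> xy yz; rewrite /pcat /= window_cat. Qed.

Lemma arrs_subp_suffix p j : arrs (subp t p j (plen p - j)) = drop j (arrs p).
Proof. by rewrite /subp /= take_oversize // size_drop. Qed.

Lemma arrs_subp_prefix p l : arrs (subp t p 0 l) = take l (arrs p).
Proof. by rewrite /subp /= drop0. Qed.

Lemma plen_subp p x l : x + l <= plen p -> plen (subp t p x l) = l.
Proof. by move=> xl; rewrite /plen /= size_takel // size_drop; move: xl; rewrite /plen /arrs; lia. Qed.

Lemma subp_full p : subp t p 0 (plen p) = p.
Proof. by case: p => v w; rewrite /subp /vtx_at /= ?take0 ?drop0 ?take_size. Qed.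

Definition blocks (p : qpath V E) (D : nat -> nat) (N : nat) : seq (qpath V E) :=
  [seq subp t p (D k) (D k.+1 - D k) | k <- iota 0 N].

Lemma size_blocks p D N : size (blocks p D N) = N.
Proof. by rewrite size_map size_iota. Qed.

Lemma nth_blocks p D N d k : k < N -> nth d (blocks p D N) k = subp t p (D k) (D k.+1 - D k).
Proof. by move=> kN; rewrite (nth_map 0) ?size_iota // nth_iota. Qed.

Lemma flatten_blocks p D N : (forall k, k < N -> D k < D k.+1) ->
  flatten (map (@arrs V E) (blocks p D N)) = window (arrs p) (D 0) (D N).
Proof.
elim: N => [|N IH] D_lt; first by rewrite /= /window subnn take0.
rewrite /blocks -addn1 iotaD map_cat map_cat flatten_cat IH => [|k kN]; last exact/D_lt/ltnW.
rewrite /= cats0 add0n addn1 window_cat ?(increasing_on_le D_lt) //.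
Qed.

End Subpaths.

Section Decompositions.
Variables (V E : finType) (s t : E -> V) (rels : seq (seq E)).
Local Notation J p := (window_in_ideal rels (arrs p)).

Lemma left_chain_Gamma p a e N D : valid s t p -> e <= plen p ->
  left_chain (J p) a e N D -> Gamma s t rels (Posz N - 1) (subp t p a (e - a)).
Proof.
move=> p_valid ep D_chain; have D_le := increasing_on_le (lchain_lt D_chain).
case: D_chain => D0 DN D_lt D_last D_block D_pair D_min.
set xs := blocks t p D N; have xs_nth d := nth_blocks t p D d (N := N).
exists (rev xs); split; first by rewrite size_rev size_blocks subrK.
split; first exact: valid_subp.
case us_def: (rev xs) => [|u0 us].
  have N0 : N = 0 by rewrite -(size_blocks t p D N) -size_rev us_def.
  by rewrite /subp /= -D0 -DN N0 subnn take0.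
have N_gt0 : 0 < N by rewrite -(size_blocks t p D N) -size_rev us_def.
have u0_def : u0 = nth p xs N.-1.
  by rewrite -[u0]/(nth p (u0 :: us) 0) -us_def nth_rev ?size_blocks // subn1.
rewrite -us_def; split; [|split; [|split]].
- rewrite u0_def xs_nth ?prednK ?ltn_predL // plen_subp.
    by rewrite DN -(D_last N_gt0) subSnn.
  by rewrite subnKC ?D_le ?leq_pred // DN.
- move=> u; rewrite mem_rev => /(nthP p) [k]; rewrite size_blocks => kN <-.
  by rewrite xs_nth // /inB valid_subp // D_block.
- move=> i; rewrite size_rev size_blocks => iN.
  rewrite !nth_rev ?size_blocks; try lia.
  have k2N : (N - i.+2).+2 <= N by lia.
  rewrite (_ : N - i.+1 = (N - i.+2).+1) ?xs_nth; try lia.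
  set k := N - i.+2 in k2N *.
  have pcat_arrs := arrs_pcat_subp t p (ltnW (D_lt k (ltnW k2N))) (ltnW (D_lt k.+1 k2N)).
  split; first by apply/composable_subp/ltnW/D_lt; lia.
  split; first by rewrite /inI pcat_arrs; apply: D_pair.
  move=> j /andP[j_gt0 _]; rewrite /inI arrs_subp_suffix pcat_arrs.
  rewrite drop_window; apply: contra (D_min k k2N); apply: window_in_ideal_up => //.
  by rewrite -addn1 leq_add2l.
- rewrite map_rev revK flatten_blocks // D0 DN.
  have -> : last u0 (rev xs) = nth p xs 0.
    by rewrite -nth_last nth_rev size_rev size_blocks ?prednK // subnn (set_nth_default p) ?size_blocks.
  by rewrite xs_nth // D0.
Qed.

Lemma plen_pcat_gt0l (x y : qpath V E) : inI rels (pcat x y) -> ~~ inI rels y -> 0 < plen x.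
Proof.
move=> xy_I; rewrite lt0n; apply: contraNneq => /size0nil x_nil.
by move: xy_I; rewrite /inI /pcat /arrs /= x_nil.
Qed.

Lemma plen_pcat_gt0r (x y : qpath V E) : inI rels (pcat x y) -> ~~ inI rels x -> 0 < plen y.
Proof.
move=> xy_I; rewrite lt0n; apply: contraNneq => /size0nil y_nil.
by move: xy_I; rewrite /inI /pcat /arrs /= y_nil cats0.
Qed.

Lemma left_decomp_chain z q us : left_decomp s t rels z q us ->
  left_chain (J q) 0 (plen q) (size us) (cuts (rev us)).
Proof.
case=> _ [_]; case: us => [q_nil|u0 us [u0_len [us_B [us_pair q_def]]]].
  by split=> //; rewrite /plen -/(arrs q) q_nil.
set xs := rev (u0 :: us); set N := size xs.
have q_arrs : arrs q = flatten (map (@arrs V E) xs) by rewrite [in LHS]q_def /= map_rev.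
have xs_nth k : k < N -> nth q xs k = nth q (u0 :: us) (N - k.+1).
  by move=> kN; rewrite nth_rev ?size_rev // -(size_rev (u0 :: us)).
have xs_B k : k < N -> ~~ inI rels (nth q xs k).
  move=> kN; have : nth q xs k \in u0 :: us by rewrite -mem_rev mem_nth.
  by move=> /us_B /andP[].
have xs_pair k : k.+1 < N -> inI rels (pcat (nth q xs k) (nth q xs k.+1)) /\
    no_proper_suffix_in_I t rels (pcat (nth q xs k) (nth q xs k.+1)).
  move=> kN; rewrite (xs_nth k) ?(xs_nth k.+1) //; last exact: ltnW.
  have -> : N - k.+1 = (N - k.+2).+1 by lia.
  by case: (us_pair (N - k.+2)) => [|_ //]; rewrite -(size_rev (u0 :: us)) -/N; lia.
have xs_pos k : k < N -> 0 < plen (nth q xs k).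
  move=> kN; have [k1N|] := ltnP k.+1 N.
    by have [/plen_pcat_gt0l pos _] := xs_pair k k1N; apply/pos/xs_B.
  rewrite xs_nth // => Nk1; rewrite (_ : N - k.+1 = 0) ?u0_len //; lia.
have D_S k : k < N -> cuts xs k.+1 = cuts xs k + plen (nth q xs k).
  exact: cutsS.
have D_win k : k < N -> window (arrs q) (cuts xs k) (cuts xs k.+1) = arrs (nth q xs k).
  exact: window_cuts.
have D_win2 k : k.+1 < N ->
    window (arrs q) (cuts xs k) (cuts xs k.+2) = arrs (pcat (nth q xs k) (nth q xs k.+1)).
  exact: window_cuts2.
rewrite -(size_rev (u0 :: us)) -/xs -/N.
have DN : cuts xs N = plen q by rewrite cuts_size -q_arrs.
split=> [|// | k kN | N_gt0 | k kN | k k2N | k k2N].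
- by rewrite /cuts take0.
- by rewrite D_S // -addn1 leq_add2l xs_pos.
- rewrite -DN -{2}(prednK N_gt0) D_S ?ltn_predL // xs_nth ?ltn_predL //.
  by rewrite prednK // subnn u0_len addn1.
- by rewrite /window_in_ideal D_win //; apply: xs_B.
- by rewrite /window_in_ideal D_win2 //; case: (xs_pair k k2N).
- have [_ no_suffix] := xs_pair k k2N.
  have pos : 0 < 1 <= plen (pcat (nth q xs k) (nth q xs k.+1)).
    by rewrite /plen size_cat -!/(plen _) addn_gt0 xs_pos // ltnW.
  by move: (no_suffix 1 pos); rewrite /inI arrs_subp_suffix -D_win2 // drop_window addn1.
Qed.

Lemma right_decomp_chain z q vs : right_decomp s t rels z q vs ->
  right_chain (J q) 0 (plen q) (size vs) (cuts vs).
Proof.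
case=> _ [_]; case: vs => [q_nil|v0 vs [v0_len [vs_B [vs_pair q_def]]]].
  by split=> //; rewrite /plen -/(arrs q) q_nil.
set xs := v0 :: vs; set N := size xs.
have q_arrs : arrs q = flatten (map (@arrs V E) xs) by rewrite [in LHS]q_def.
have xs_B k : k < N -> ~~ inI rels (nth q xs k).
  by move=> kN; have /vs_B/andP[] := mem_nth q kN.
have xs_pos k : k < N -> 0 < plen (nth q xs k).
  case: k => [|k] kN; first by rewrite v0_len.
  by have [_ [/plen_pcat_gt0r pos _]] := vs_pair k kN; apply/pos/xs_B/ltnW.
have D_S k : k < N -> cuts xs k.+1 = cuts xs k + plen (nth q xs k).
  exact: cutsS.
have D_win k : k < N -> window (arrs q) (cuts xs k) (cuts xs k.+1) = arrs (nth q xs k).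
  exact: window_cuts.
have D_win2 k : k.+1 < N ->
    window (arrs q) (cuts xs k) (cuts xs k.+2) = arrs (pcat (nth q xs k) (nth q xs k.+1)).
  exact: window_cuts2.
split=> [|| k kN | N_gt0 | k kN | k k2N | k k2N].
- by rewrite /cuts take0.
- by rewrite cuts_size -q_arrs.
- by rewrite D_S // -addn1 leq_add2l xs_pos.
- by rewrite D_S // /cuts take0 v0_len.
- by rewrite /window_in_ideal D_win //; apply: xs_B.
- by rewrite /window_in_ideal D_win2 //; case: (vs_pair k k2N) => _ [].
- have [_ [_ no_prefix]] := vs_pair k k2N.
  set l := (cuts xs k.+2).-1 - cuts xs k.
  have l_lt : l < plen (pcat (nth q xs k) (nth q xs k.+1)).
    have := D_S k (ltnW k2N); have := D_S k.+1 k2N; have := xs_pos k.+1 k2N.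
    by rewrite /l /plen size_cat -!/(plen _); lia.
  have := no_prefix l l_lt; rewrite /inI arrs_subp_prefix -D_win2 // take_window; last by lia.
  by rewrite /l subnKC //; have := D_S k (ltnW k2N); have := D_S k.+1 k2N; have := xs_pos k.+1 k2N; lia.
Qed.

Lemma right_chain_decomp p a e N D : valid s t p -> e <= plen p ->
  right_chain (J p) a e N D -> exists vs, right_decomp s t rels (Posz N - 1) (subp t p a (e - a)) vs.
Proof.
move=> p_valid ep D_chain; have D_le := increasing_on_le (rchain_lt D_chain).
case: D_chain => D0 DN D_lt D_first D_block D_pair D_min.
set xs := blocks t p D N; have xs_nth d := nth_blocks t p D d (N := N).
exists xs; split; first by rewrite size_blocks subrK.
split; first exact: valid_subp.
case xs_def: xs => [|v0 vs].
  have N0 : N = 0 by rewrite -(size_blocks t p D N) -/xs xs_def.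
  by rewrite /subp /= -D0 -DN N0 subnn take0.
have N_gt0 : 0 < N by rewrite -(size_blocks t p D N) -/xs xs_def.
have v0_def : v0 = nth p xs 0 by rewrite xs_def.
rewrite -xs_def; split; [|split; [|split]].
- rewrite v0_def xs_nth // plen_subp; first by rewrite D_first // D0 subSnn.
  by rewrite subnKC ?D_le // (leq_trans _ ep) // -DN D_le.
- move=> u /(nthP p) [k]; rewrite size_blocks => kN <-.
  by rewrite xs_nth // /inB valid_subp // D_block.
- move=> k; rewrite size_blocks => k2N; rewrite !xs_nth //; try lia.
  have pcat_arrs := arrs_pcat_subp t p (ltnW (D_lt k (ltnW k2N))) (ltnW (D_lt k.+1 k2N)).
  split; first by apply/composable_subp/ltnW/D_lt; lia.
  split; first by rewrite /inI pcat_arrs; apply: D_pair.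
  have D2p : D k.+2 <= plen p by rewrite (leq_trans _ ep) // -DN D_le.
  move=> l; rewrite /plen -/(arrs _) pcat_arrs size_window // => l_lt.
  rewrite /inI arrs_subp_prefix pcat_arrs take_window; last by lia.
  apply: contra (D_min k k2N); apply: window_in_ideal_up => //; lia.
- rewrite flatten_blocks // D0 DN.
  by rewrite v0_def xs_nth // D0.
Qed.

Lemma Gamma_subp_left_chain p a l N : a + l <= plen p ->
  Gamma s t rels (Posz N - 1) (subp t p a l) -> exists D, left_chain (J p) a (a + l) N D.
Proof.
move=> alp [us us_dec]; have [size_us _] := us_dec.
move: size_us; rewrite subrK => -[<-].
have := left_decomp_chain us_dec; rewrite plen_subp // => D_chain.
exists (fun k => a + cuts (rev us) k).
rewrite -[a in left_chain _ a](addn0 a); apply: left_chain_shift D_chain.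
by move=> x y /andP[_ yl]; rewrite /window_in_ideal window_take_drop.
Qed.

End Decompositions.

Section Ambiguity.
Variables (V E : finType) (s t : E -> V) (rels : seq (seq E)).
Local Notation J p := (window_in_ideal rels (arrs p)).
Variables (n : nat) (p : qpath V E).
Hypothesis p_amb : Gamma s t rels (Posz n) p.

Definition left_cuts : nat -> nat := cuts (rev (left_dec s t rels (Posz n) p)).
Definition right_cuts : nat -> nat := cuts (right_dec s t rels (Posz n) p).

Lemma left_dec_spec : left_decomp s t rels (Posz n) p (left_dec s t rels (Posz n) p).
Proof. exact: epsilon_spec p_amb. Qed.

Lemma size_left_dec : size (left_dec s t rels (Posz n) p) = n.+1.
Proof. by case: left_dec_spec; rewrite -[1%R]/(Posz 1) -PoszD addn1 => -[]. Qed.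

Lemma valid_amb : valid s t p.
Proof. by case: left_dec_spec => _ []. Qed.

Lemma left_cuts_chain : left_chain (J p) 0 (plen p) n.+1 left_cuts.
Proof. by rewrite -size_left_dec; apply: left_decomp_chain left_dec_spec. Qed.

Lemma right_dec_spec : right_decomp s t rels (Posz n) p (right_dec s t rels (Posz n) p).
Proof.
apply: epsilon_spec.
have := right_chain_decomp valid_amb (leqnn _)
  (left_to_right_chain (@window_in_ideal_up _ rels (arrs p)) left_cuts_chain).
by rewrite subn0 subp_full -addn1 PoszD addrK.
Qed.

Lemma right_cuts_chain : right_chain (J p) 0 (plen p) n.+1 right_cuts.
Proof.
have := right_decomp_chain right_dec_spec.
by case: right_dec_spec; rewrite -[1%R]/(Posz 1) -PoszD addn1 => -[->].
Qed.

Lemma sigma_occE : sigma_occ s t rels (Posz n - 1) (Posz n) p = (left_cuts 1, plen p - left_cuts 1).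
Proof.
rewrite /sigma_occ subrK /=; set us := left_dec s t rels (Posz n) p.
suff -> : plen p = left_cuts 1 + sumn (map (@plen V E) (take n us)) by rewrite addnK addKn.
have us_size : size us = n.+1 := size_left_dec.
rewrite -(lchainN left_cuts_chain) /left_cuts /cuts -/us take_oversize ?size_rev ?us_size //.
have -> : take 1 (rev us) = rev (drop n us).
  rewrite -[in LHS](cat_take_drop n us) rev_cat take_size_cat //.
  by rewrite size_rev size_drop us_size subSnn.
by rewrite !map_rev !sumn_rev addnC -sumn_cat -map_cat cat_take_drop.
Qed.

Lemma pi_occE : pi_occ s t rels (Posz n - 1) (Posz n) p = (0, right_cuts n).
Proof. by rewrite /pi_occ subrK. Qed.

Lemma Sub_occ_sigma : Sub_occ s t rels (Posz n) p (sigma_occ s t rels (Posz n - 1) (Posz n) p).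
Proof.
have D_chain := left_cuts_chain; have D1_le := left_chain_bounds D_chain (ltn0Sn n).
rewrite sigma_occE; split=> /=; first by rewrite subnKC //; case/andP: D1_le.
by apply: left_chain_Gamma valid_amb (leqnn _) (left_chain_behead D_chain).
Qed.

Lemma Sub_occ_pi : Sub_occ s t rels (Posz n) p (pi_occ s t rels (Posz n - 1) (Posz n) p).
Proof.
have E_chain := right_cuts_chain; have /andP[_ En_le] := right_chain_bounds E_chain (leqnSn n).
rewrite pi_occE; split=> //=.
have [D D_chain] := right_to_left_chain (@window_in_ideal_up _ rels (arrs p))
  (right_chain_take E_chain (leqnSn n)).
by rewrite -(subn0 (right_cuts n)); apply: left_chain_Gamma valid_amb En_le D_chain.
Qed.

Lemma Sub_occ_sigma_or_pi o : ~~ odd n -> Sub_occ s t rels (Posz n) p o ->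
  o = sigma_occ s t rels (Posz n - 1) (Posz n) p \/ o = pi_occ s t rels (Posz n - 1) (Posz n) p.
Proof.
case: o => a l n_even [/= al_le q_amb].
have [A A_chain] := Gamma_subp_left_chain al_le q_amb.
have J_up := @window_in_ideal_up _ rels (arrs p).
have D_chain := left_cuts_chain; rewrite sigma_occE pi_occE.
have [al_L|al_ne] := eqVneq (a + l) (plen p).
  rewrite al_L in A_chain; left.
  have := left_chain_top_uniq J_up D_chain A_chain (leqnSn n) (leqnn n).
  by rewrite subSnn subnn (lchain0 A_chain) => ->; congr pair; lia.
right.
have al_lt : a + l <= left_cuts n.
  by rewrite -ltnS (lchain_last D_chain) // ltn_neqAle al_ne.
have := left_chain_lag J_up D_chain A_chain al_lt (k := n./2).
rewrite even_halfK // subnn (lchain0 D_chain) (lchain0 A_chain) leqn0 => /(_ (leqnn n) (ltnSn n)) /eqP a0.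
rewrite a0 in A_chain *; congr pair.
have := right_chain_bot_uniq J_up right_cuts_chain (left_to_right_chain J_up A_chain) (leqnSn n) (leqnn n).
by rewrite (rchainN (left_to_right_chain J_up A_chain)).
Qed.

End Ambiguity.

Theorem mainTheorem4 (V E : finType) (s t : E -> V) (rels : seq (seq E))
  (Hrels_path : forall r, r \in rels -> validw s t r)
  (Hrels_len : forall r, r \in rels -> 2 <= size r)
  (Hfindim : exists N, forall p : qpath V E, valid s t p -> N <= plen p -> inI rels p)
  (n : nat) (Hn : ~~ odd n) (p : qpath V E) (Hp : Gamma s t rels (Posz n) p) :
  (forall o : nat * nat,
     Sub_occ s t rels (Posz n) p o <->
       (o = sigma_occ s t rels (Posz n - 1)%R (Posz n) p \/ o = pi_occ s t rels (Posz n - 1)%R (Posz n) p)) /\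
  sigma_occ s t rels (Posz n - 1)%R (Posz n) p <> pi_occ s t rels (Posz n - 1)%R (Posz n) p.
Proof.
split=> [o|].
  split; first exact: Sub_occ_sigma_or_pi.
  by case=> ->; [exact: Sub_occ_sigma | exact: Sub_occ_pi].
rewrite sigma_occE // pi_occE => -[D1_0 _].
have D_chain := left_cuts_chain Hp.
by have := lchain_lt D_chain (ltn0Sn n); rewrite (lchain0 D_chain) D1_0.
Qed.
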